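(* Let $q$ be a prime power and let $n$ be an odd positive integer coprime to $q$. Then $x-1$ is the only SCRIM factor of $x^{n}-1$ in $\mathbb{F}_{q^2}[x]$ if and only if for every prime divisor $l$ of $n$, $\mathrm{ord}_l(q^2)$ is even or $\mathrm{ord}_l(q)$ is odd.
   Context: $\mathbb{F}_{q^2}$ is the finite field with $q^2$ elements. For $\alpha\in\mathbb{F}_{q^2}$ put $\bar\alpha=\alpha^q$, and for $f(x)=\sum_i f_ix^i$ put $\overline{f(x)}=\sum_i \bar f_i x^i$. For $f(x)$ with $f(0)\neq 0$, $f^*(x)=x^{\deg f}f(0)^{-1}f(1/x)$ and $f^\dagger(x)=\overline{f^*(x)}$. A polynomial is SCRIM if it is monic, irreducible over $\mathbb{F}_{q^2}$, has nonzero constant term, and satisfies $f=f^\dagger$. A SCRIM factor of $x^n-1$ is a SCRIM polynomial dividing $x^n-1$ in $\mathbb{F}_{q^2}[x]$. $\mathrm{ord}_l(a)$ denotes the multiplicative order of $a$ modulo $l$. *)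

From HB Require Import structures.
From mathcomp Require Import all_boot all_order all_algebra all_field.
Set Implicit Arguments. Unset Strict Implicit. Unset Printing Implicit Defensive.
Import GRing.Theory.
Local Open Scope ring_scope.

(* F plays the role of F_{q^2}; conjugation is a |-> a^q. *)
Definition pconj (F : fieldType) (q : nat) (f : {poly F}) : {poly F} :=
  map_poly (fun a : F => a ^+ q) f.

(* f^*(x) = x^{deg f} f(0)^{-1} f(1/x): the coefficient list of
   x^{deg f} f(1/x) is the reversed coefficient list of f. *)
Definition recip (F : fieldType) (f : {poly F}) : {poly F} :=
  (f`_0)^-1 *: Poly (rev f).

Definition dagger (F : fieldType) (q : nat) (f : {poly F}) : {poly F} :=
  pconj q (recip f).

Definition SCRIM (F : fieldType) (q : nat) (f : {poly F}) : Prop :=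
  [/\ f \is monic, irreducible_poly f, f`_0 != 0 & f = dagger q f].

(* multiplicative order of a modulo l: least k > 0 with a^k = 1 (mod l).
   Searched among 0..l-1; this covers every case with l prime and
   coprime to a (the order divides l-1). *)
Definition ord_mod (l a : nat) : nat :=
  find (fun k => (0 < k)%N && (a ^ k == 1 %[mod l])) (iota 0 l).

From HB Require Import structures.
From mathcomp Require Import all_boot all_order all_algebra all_field.
From mathcomp Require Import pgroup cyclic zify.
Set Implicit Arguments. Unset Strict Implicit. Unset Printing Implicit Defensive.
Import GRing.Theory.

(* Let f be a monic irreducible factor of x^n - 1 and a a root of f in F[x]/(f).
   The roots of f are the conjugates a^(q^(2j)), j > 0, and the roots of f^dagger
   are the (z^-1)^q for the roots z of f; hence f = f^dagger iff a^-q is a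
   conjugate of a, i.e. iff a^(q^s + 1) = 1 for some odd s. Since a^n = 1 and
   q is prime to n, a <> 1 then forces a prime l | n dividing some q^s + 1 with
   s odd, which happens iff ord_l(q^2) is odd and ord_l(q) is even. Conversely,
   for such an l every irreducible factor of 1 + x + ... + x^(l-1) is SCRIM. *)

Section OrdMod.
Variables (l a : nat).
Hypotheses (l_pr : prime l) (co_la : coprime l a).

Let fermat : a ^ l.-1 = 1 %[mod l].
Proof. by rewrite -totient_prime // Euler_exp_totient // coprime_sym. Qed.

Let has_ord : has (fun k => (0 < k) && (a ^ k == 1 %[mod l])) (iota 0 l).
Proof.
apply/hasP; exists l.-1; first by rewrite mem_iota /= ltn_predL prime_gt0.
by rewrite fermat eqxx andbT -subn1 subn_gt0 prime_gt1.
Qed.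

Lemma ord_mod_dvdn k : (ord_mod l a %| k) = (a ^ k == 1 %[mod l]).
Proof.
have := has_ord; rewrite has_find size_iota => ord_lt_l.
have /andP[ord_gt0 /eqP ord1] := nth_find 0 has_ord.
rewrite -/(ord_mod l a) nth_iota // add0n in ord_gt0 ord1.
have -> : a ^ k = (a ^ ord_mod l a) ^ (k %/ ord_mod l a) * a ^ (k %% ord_mod l a).
  by rewrite -expnM -expnD mulnC -divn_eq.
rewrite -modnMml -modnXm ord1 modnXm exp1n modnMml mul1n /dvdn.
have [-> | r_gt0] := posnP (k %% ord_mod l a); first by rewrite expn0 !eqxx.
have r_lt : (k %% ord_mod l a < ord_mod l a)%N by rewrite ltn_mod.
have := before_find 0 r_lt; rewrite nth_iota ?(ltn_trans r_lt) // add0n r_gt0 /=.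
by move=> ->.
Qed.

End OrdMod.

Lemma sqr_eq1_mod l x : prime l -> (0 < x)%N ->
  (x ^ 2 == 1 %[mod l]) = (x == 1 %[mod l]) || (l %| x + 1).
Proof.
move=> l_pr x_gt0.
rewrite !eqn_mod_dvd ?expn_gt0 ?x_gt0 //.
by rewrite -[in x ^ 2 - 1](exp1n 2) subn_sqr Euclid_dvdM.
Qed.

Lemma dvdn_expn_add1P l q : prime l -> odd l -> coprime l q ->
  (exists2 s, odd s & l %| q ^ s + 1) <->
  odd (ord_mod l (q ^ 2)) && ~~ odd (ord_mod l q).
Proof.
move=> l_pr l_odd co_lq.
have q_gt0 : 0 < q.
  by case: posnP co_lq => // ->; rewrite /coprime gcdn0 => /eqP l1; rewrite l1 in l_pr.
have co_lq2 : coprime l (q ^ 2) by rewrite coprimeXr.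
have qX_gt0 s : 0 < q ^ s by rewrite expn_gt0 q_gt0.
split=> [[s s_odd l_dvd] | /andP[ord2_odd ord_even]].
  have qs2 : (q ^ s) ^ 2 == 1 %[mod l] by rewrite sqr_eq1_mod ?l_dvd ?orbT.
  have ord2_dvd : ord_mod l (q ^ 2) %| s by rewrite ord_mod_dvdn // expnAC.
  rewrite (dvdn_odd ord2_dvd s_odd) /=; apply/negP => ord_odd.
  have /eqP qs1 : q ^ s == 1 %[mod l].
    rewrite -ord_mod_dvdn // -(Gauss_dvdl _ (_ : coprime _ 2)) ?coprimen2 //.
    by rewrite ord_mod_dvdn // expnM.
  have : l %| 2.
    rewrite -(dvdn_addr 2 (_ : l %| q ^ s - 1)) -?eqn_mod_dvd ?qs1 //.
    by case: (q ^ s) (qX_gt0 s) l_dvd => // x _; rewrite subSS subn0 addn2 addn1.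
  by rewrite dvdn_prime2 // => /eqP l2; rewrite l2 in l_odd.
exists (ord_mod l (q ^ 2)) => //.
have qt2 : (q ^ ord_mod l (q ^ 2)) ^ 2 == 1 %[mod l] by rewrite expnAC -ord_mod_dvdn.
have qt_neq1 : q ^ ord_mod l (q ^ 2) != 1 %[mod l].
  apply: contraL ord2_odd; rewrite -ord_mod_dvdn // -dvdn2.
  by apply: dvdn_trans; rewrite dvdn2.
by move: qt2; rewrite sqr_eq1_mod // (negbTE qt_neq1).
Qed.

Lemma gcdn_expn_add1_eq1 n q s : odd n -> coprime n q -> odd s ->
  (forall l, prime l -> l %| n -> ~~ odd (ord_mod l (q ^ 2)) || odd (ord_mod l q)) ->
  gcdn n (q ^ s + 1) = 1.
Proof.
move=> n_odd co_nq s_odd ord_cond.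
set d := gcdn n (q ^ s + 1).
have d_gt0 : 0 < d by rewrite gcdn_gt0 addn1 orbT.
apply/eqP; rewrite eqn_leq d_gt0 andbT leqNgt; apply/negP => d_gt1.
have l_pr : prime (pdiv d) := pdiv_prime d_gt1.
have l_n : pdiv d %| n := dvdn_trans (pdiv_dvd d) (dvdn_gcdl _ _).
have l_dvd : pdiv d %| q ^ s + 1 := dvdn_trans (pdiv_dvd d) (dvdn_gcdr _ _).
have /andP[ord2_odd ord_even] :
    odd (ord_mod (pdiv d) (q ^ 2)) && ~~ odd (ord_mod (pdiv d) q).
  apply/dvdn_expn_add1P; last by exists s.
  - exact: l_pr.
  - exact: dvdn_odd l_n n_odd.
  - exact: coprime_dvdl l_n co_nq.
by move: (ord_cond _ l_pr l_n); rewrite ord2_odd (negbTE ord_even).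
Qed.

Local Open Scope ring_scope.

Lemma expr_gcdn_eq1 (R : pzRingType) (x : R) m n : (0 < n)%N ->
  x ^+ m = 1 -> x ^+ n = 1 -> x ^+ gcdn m n = 1.
Proof.
move=> n_gt0 xm xn; have [u _ /dvdnP[k Ek]] := Bezoutr m n_gt0.
have : x ^+ (gcdn m n + u * m) = 1 by rewrite Ek mulnC exprM xn expr1n.
by rewrite exprD mulnC exprM xm expr1n mulr1.
Qed.

Lemma dvdp_Xn_sub1 (R : idomainType) m n : (m %| n)%N ->
  ('X^m - 1 : {poly R}) %| 'X^n - 1.
Proof. by move=> /dvdnP[k ->]; rewrite mulnC exprM [X in _ %| X]subrX1 dvdp_mulIl. Qed.

Lemma root_map_Xn_sub1 (F K : fieldType) (io : {rmorphism F -> K}) n (x : K) :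
  root (map_poly io ('X^n - 1)) x = (x ^+ n == 1).
Proof. by rewrite /root rmorphB /= map_polyXn rmorph1 !hornerE subr_eq0. Qed.

Lemma root_map_neq0 (F K : fieldType) (io : {rmorphism F -> K}) (f : {poly F}) z :
  f`_0 != 0 -> root (map_poly io f) z -> z != 0.
Proof.
by move=> f0_neq0; apply: contraTneq => ->; rewrite /root horner_coef0 coef_map fmorph_eq0.
Qed.

Lemma monic_irreducible_factor (F : finFieldType) (g : {poly F}) : (1 < size g)%N ->
  exists f, [/\ f \is monic, irreducible_poly f & f %| g].
Proof.
have [n] := ubnP (size g); elim: n g => // n IHn g /ltnSE size_g g_gt1.
have [/irreducibleP g_irr | ] := boolP (irreducibleb g).
  have lc_neq0 : lead_coef g != 0 by rewrite lead_coef_eq0 -size_poly_gt0 ltnW.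
  exists ((lead_coef g)^-1 *: g); split.
  - by rewrite monicE lead_coefZ mulVf.
  - split=> [|h h_neq1]; first by rewrite size_scale ?invr_eq0.
    have g_eqp : (lead_coef g)^-1 *: g %= g by rewrite eqp_scale ?invr_eq0.
    rewrite (eqp_dvdr _ g_eqp) (eqp_rtrans g_eqp); exact: g_irr.
  - by rewrite dvdpZl // invr_eq0.
rewrite /irreducibleb g_gt1 negb_forall => /existsP[h].
rewrite negb_imply -ltnNge => /andP[h_g h_gt1].
have size_h : (size h < size g)%N.
  by rewrite (leq_ltn_trans (size_npoly h)) // prednK // ltnW.
have [f [f_monic f_irr f_h]] := IHn h (leq_trans size_h size_g) h_gt1.
by exists f; split; rewrite // (dvdp_trans f_h) // Pdiv.Idomain.dvdpE.
Qed.

Lemma horner_map_expn_pchar (F K : fieldType) (io : {rmorphism F -> K}) N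
    (h h' : {poly F}) (z : K) :
  [pchar K].-nat N -> (forall i, h'`_i = h`_i ^+ N) ->
  (map_poly io h).[z] ^+ N = (map_poly io h').[z ^+ N].
Proof.
move=> N_pchar h'E; have N_gt0 : (0 < N)%N by case/andP: N_pchar.
rewrite !(@horner_coef_wide _ (size h + size h')) ?size_map_poly ?leq_addr ?leq_addl //.
rewrite (big_morph (fun x : K => x ^+ N) (fun x y => exprDn_pchar x y N_pchar)
                   (_ : 0 ^+ N = 0)) ?expr0n ?gtn_eqF //.
by apply: eq_bigr => i _; rewrite !coef_map h'E exprMn -(rmorphXn io) -!exprM mulnC.
Qed.

Lemma pnat_card_finField (F : finFieldType) : [pchar F].-nat #|F|.
Proof.
have [p _ pF] := finPcharP F.
by rewrite (eq_pnat _ (pcharf_eq pF)); have := pprimeChar_pgroup pF; rewrite /pgroup cardsT.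
Qed.

Lemma expf_card_expn (F : finFieldType) (x : F) j : x ^+ (#|F| ^ j) = x.
Proof. by elim: j => [|j IHj]; rewrite ?expr1 // expnS exprM expf_card IHj. Qed.

Section FrobeniusOverFiniteField.
Variables (F : finFieldType) (K : fieldType) (io : {rmorphism F -> K}).

Lemma horner_map_expn_card (g : {poly F}) z j :
  (map_poly io g).[z] ^+ (#|F| ^ j) = (map_poly io g).[z ^+ (#|F| ^ j)].
Proof.
apply: horner_map_expn_pchar => [|i]; last by rewrite expf_card_expn.
by rewrite pnatX (eq_pnat _ (fmorph_pchar io)) pnat_card_finField.
Qed.

Lemma root_map_expn_card (g : {poly F}) z j :
  root (map_poly io g) z -> root (map_poly io g) (z ^+ (#|F| ^ j)).
Proof.
rewrite /root -horner_map_expn_card => /eqP->.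
by rewrite expf_eq0 eqxx andbT expn_gt0 ltnW ?card_finNzRing_gt1.
Qed.

End FrobeniusOverFiniteField.

Section RuptureField.
Variables (F K : finFieldType) (io : {rmorphism F -> K}) (f : {poly F}) (a : K).
Hypotheses (root_a : forall g, root (map_poly io g) a = (f %| g))
           (gen_a : forall z, exists g, z = (map_poly io g).[a])
           (cardK : #|K| = (#|F| ^ (size f).-1)%N).

Local Notation Q := #|F|.
Local Notation m := (size f).-1.

Let Q_gt1 : (1 < Q)%N. Proof. exact: card_finNzRing_gt1. Qed.

Let size_f_gt0 : (0 < size f)%N.
Proof.
rewrite lt0n; apply: contraTneq (card_finNzRing_gt1 K) => size_f0.
by rewrite cardK size_f0 expn0.
Qed.

Lemma rupture_expn_card : a ^+ (Q ^ m) = a.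
Proof. by rewrite -cardK expf_card. Qed.

Lemma rupture_period_ge d : (0 < d)%N -> a ^+ (Q ^ d) = a -> (m <= d)%N.
Proof.
move=> d_gt0 a_fixed.
have fixed (z : K) : z ^+ (Q ^ d) = z.
  by have [g ->] := gen_a z; rewrite horner_map_expn_card a_fixed.
have Qd_gt1 : (1 < Q ^ d)%N by rewrite -{1}(expn0 Q) ltn_exp2l.
have size_P : size ('X^(Q ^ d) - 'X : {poly K}) = (Q ^ d).+1.
  by rewrite size_polyDl size_polyXn // size_polyN size_polyX ltnS.
have := @max_poly_roots _ ('X^(Q ^ d) - 'X) (enum K).
rewrite -size_poly_eq0 size_P enum_uniq -cardE cardK ltnS leq_exp2l //; apply=> //.
by apply/allP => z _; rewrite /root !hornerE fixed subrr.
Qed.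

Lemma uniq_rupture_conjugates : uniq [seq a ^+ (Q ^ j) | j <- iota 1 m].
Proof.
have expQ_add k l : a ^+ (Q ^ (k + l)) = (a ^+ (Q ^ k)) ^+ (Q ^ l) by rewrite expnD exprM.
rewrite map_inj_in_uniq ?iota_uniq // => i j; rewrite !mem_iota !add1n !ltnS.
move=> /andP[i_gt0 i_le] /andP[j_gt0 j_le] conj_eq.
wlog lt_ij : i j i_gt0 i_le j_gt0 j_le conj_eq / (i < j)%N.
  by move=> wlog_ij; case: (ltngtP i j) => // ij; [|apply/esym]; apply: wlog_ij.
have : a ^+ (Q ^ (j - i)) = a.
  rewrite -{2}rupture_expn_card -(subnKC i_le) expQ_add conj_eq -expQ_add.
  by rewrite (_ : j + (m - i) = m + (j - i))%N ?expQ_add ?rupture_expn_card //; lia.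
by move/rupture_period_ge; rewrite subn_gt0 => /(_ lt_ij); lia.
Qed.

Lemma root_rupture_conjugate c :
  root (map_poly io f) c -> exists2 j, (0 < j)%N & c = a ^+ (Q ^ j).
Proof.
move=> root_c; set conj := [seq a ^+ (Q ^ j) | j <- iota 1 m].
have [/mapP[j] | c_new] := boolP (c \in conj).
  by rewrite mem_iota => /andP[j_gt0 _] ->; exists j.
have f_neq0 : map_poly io f != 0 by rewrite map_poly_eq0 -size_poly_gt0.
have roots_conj : all (root (map_poly io f)) (c :: conj).
  apply/allP => _ /predU1P[-> // | /mapP[j _ ->]].
  by apply: root_map_expn_card; rewrite root_a.
have := max_poly_roots f_neq0 roots_conj.
rewrite /= c_new uniq_rupture_conjugates size_map size_iota size_map_poly.
by rewrite prednK // ltnn => /(_ isT).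
Qed.

End RuptureField.

Lemma rupture_field (F : finFieldType) (f : {poly F}) :
  f \is monic -> irreducible_poly f ->
  exists (K : finFieldType) (io : {rmorphism F -> K}) (a : K),
    [/\ forall g, root (map_poly io g) a = (f %| g),
        forall z, exists g, z = (map_poly io g).[a]
      & #|K| = (#|F| ^ (size f).-1)%N].
Proof.
move=> f_monic f_irr; have f_mi : monic_irreducible_poly f by [].
pose K : finFieldType := {poly %/ f with f_mi}.
pose io : {rmorphism F -> K} := qpolyC f.
have horner_qX g : (map_poly io g).[('qX : K)] = in_qpoly f g.
  by rewrite -in_qpoly_comp_horner comp_polyXr.
exists K, io, 'qX; split.
- move=> g; rewrite /root horner_qX; apply/eqP/idP => [/val_eqP /= | f_g].
    by rewrite -Pdiv.IdomainMonic.modpE ?mk_monicE.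
  by apply/val_eqP; rewrite /= -Pdiv.IdomainMonic.modpE ?mk_monicE.
- move=> z; exists (val z); rewrite horner_qX; apply: val_inj => /=.
  symmetry; apply: in_qpoly_small; exact: size_mk_monic.
- exact: card_qfpoly.
Qed.

Section Dagger.
Variables (F : fieldType) (q : nat).
Hypothesis q_gt0 : (0 < q)%N.

Let conj0 : (fun c : F => c ^+ q) 0 = 0.
Proof. by rewrite /= expr0n gtn_eqF. Qed.

Let Poly_rev (f : {poly F}) : f`_0 != 0 -> Poly (rev f) = rev f :> seq F.
Proof.
move=> f0_neq0; apply: (@PolyK _ 0).
by case: (polyseq f) f0_neq0 => [|c s]; rewrite ?eqxx //= rev_cons last_rcons.
Qed.

Lemma size_recip (f : {poly F}) : f`_0 != 0 -> size (recip f) = size f.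
Proof. by move=> f0_neq0; rewrite size_scale ?invr_eq0 // Poly_rev ?size_rev. Qed.

Lemma recip_monic (f : {poly F}) : f`_0 != 0 -> recip f \is monic.
Proof.
move=> f0_neq0; have size_f_gt0 : (0 < size f)%N.
  by rewrite size_poly_gt0; apply: contraNneq f0_neq0 => ->; rewrite coef0.
rewrite monicE lead_coefE size_recip // coefZ coef_Poly nth_rev ?prednK //.
by rewrite subnn mulVf.
Qed.

Lemma size_dagger (f : {poly F}) : f`_0 != 0 -> size (dagger q f) = size f.
Proof.
move=> f0_neq0; rewrite size_map_poly_id0 ?size_recip //.
by rewrite (eqP (recip_monic f0_neq0)) expr1n oner_neq0.
Qed.

Lemma dagger_monic (f : {poly F}) : f`_0 != 0 -> dagger q f \is monic.
Proof.
move=> f0_neq0; have := recip_monic f0_neq0; rewrite !monicE => /eqP lc1.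
by rewrite lead_coef_map_id0 // lc1 expr1n ?oner_neq0.
Qed.

Lemma horner_map_dagger (K : fieldType) (io : {rmorphism F -> K}) (f : {poly F}) z :
  z != 0 -> (map_poly io (dagger q f)).[z] =
    io ((f`_0)^-1 ^+ q) * z ^+ (size f).-1 * (map_poly io (pconj q f)).[z^-1].
Proof.
move=> z_neq0; set n := size f.
have size_dagger_le : (size (dagger q f) <= n)%N.
  rewrite (leq_trans (size_poly _ _)) // (leq_trans (size_scale_leq _ _)) //.
  by rewrite (leq_trans (size_Poly _)) // size_rev.
rewrite !(@horner_coef_wide _ n) ?size_map_poly ?size_poly //.
rewrite -mulrA !big_distrr /= (reindex_inj rev_ord_inj) /=.
apply: eq_bigr => j _; have j_lt := ltn_ord j.
rewrite !coef_map /dagger /pconj !coef_map_id0 // /recip coefZ coef_Poly /=.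
rewrite nth_rev ?size_rev -/n; last by lia.
have -> : (n - (n - j.+1).+1 = j)%N by lia.
rewrite exprMn rmorphM /= -!mulrA; congr (_ * _); rewrite mulrCA; congr (_ * _).
have -> : n.-1 = (n - j.+1 + j)%N by lia.
by rewrite exprD -mulrA exprVn mulrV ?mulr1 // unitfE expf_neq0.
Qed.

Lemma dagger_XsubC : [pchar F].-nat q -> dagger q ('X - 1 : {poly F}) = 'X - 1.
Proof.
move=> q_pchar; have E : polyseq ('X - 1 : {poly F}) = [:: -1; 1].
  by rewrite -polyC1 polyseqXsubC.
apply/polyP => i; rewrite /dagger /pconj /recip coef_map_id0 // coefZ coef_Poly E /=.
rewrite invrN1; case: i => [|[|i]] /=.
- by rewrite mulr1 exprNn_pchar // expr1n.
- by rewrite mulrNN mulr1 expr1n.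
- by rewrite !nth_nil mulr0 expr0n gtn_eqF.
Qed.

End Dagger.

Section SelfConjugateReciprocal.
Variables (F : finFieldType) (q : nat).
Hypotheses (q_pchar : [pchar F].-nat q) (cardF : #|F| = (q ^ 2)%N).

Let q_gt0 : (0 < q)%N. Proof. by case/andP: q_pchar. Qed.

Let conjK (c : F) : (c ^+ q) ^+ q = c.
Proof. by rewrite -exprM mulnn -cardF expf_card. Qed.

Lemma scrim_XsubC : SCRIM q ('X - 1 : {poly F}).
Proof.
split; rewrite ?dagger_XsubC //.
- by rewrite -polyC1 monicXsubC.
- by rewrite -polyC1; apply: irredp_XsubC.
- by rewrite coefB coefX coef1 sub0r oppr_eq0 oner_eq0.
Qed.

Lemma root_map_dagger (K : fieldType) (io : {rmorphism F -> K}) (f : {poly F}) z :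
  f`_0 != 0 -> z != 0 ->
  root (map_poly io (dagger q f)) z = root (map_poly io f) (z^-1 ^+ q).
Proof.
move=> f0_neq0 z_neq0.
rewrite /root horner_map_dagger // !mulf_eq0 fmorph_eq0 !expf_eq0 q_gt0 invr_eq0.
rewrite (negbTE f0_neq0) (negbTE z_neq0) !andbF /=.
rewrite -(@horner_map_expn_pchar _ _ io _ (pconj q f)) ?expf_eq0 ?q_gt0 //.
  by rewrite (eq_pnat _ (fmorph_pchar io)).
by move=> i; rewrite coef_map_id0 ?conjK //= expr0n gtn_eqF.
Qed.

Lemma dagger_fixedP (K : fieldType) (io : {rmorphism F -> K}) (f : {poly F}) (a : K) :
  f \is monic -> f`_0 != 0 -> (forall g, root (map_poly io g) a = (f %| g)) ->
  reflect (f = dagger q f) (root (map_poly io f) (a^-1 ^+ q)).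
Proof.
move=> f_monic f0_neq0 root_a.
have a_neq0 : a != 0 by apply: (root_map_neq0 (io := io) f0_neq0); rewrite root_a.
rewrite -root_map_dagger // root_a; apply: (iffP idP) => [f_dagger | <-//].
apply/eqP; rewrite -eqp_monic ?dagger_monic // -dvdp_size_eqp //.
by rewrite size_dagger.
Qed.

Lemma natr_neq0_coprime l : prime l -> coprime l q -> l%:R != 0 :> F.
Proof.
move=> l_pr; apply: contraTneq => l0.
have lF : l \in [pchar F] by rewrite inE l_pr l0 eqxx.
have [k q_lk] : {k | q = l ^ k}%N by apply: p_natP; rewrite -(eq_pnat _ (pcharf_eq lF)).
have : (1 < q)%N.
  by rewrite -(ltn_exp2r 1 q (isT : 0 < 2)%N) exp1n -cardF card_finNzRing_gt1.
rewrite q_lk prime_coprime //; case: k {q_lk} => [|k] // _.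
by rewrite dvdn_exp.
Qed.

Lemma scrim_factor_Xn_sub1 l s :
  prime l -> coprime l q -> odd s -> (l %| q ^ s + 1)%N ->
  exists f : {poly F}, [/\ SCRIM q f, f %| 'X^l - 1 & ~~ root f 1].
Proof.
move=> l_pr co_lq s_odd l_dvd.
pose g : {poly F} := \poly_(i < l) 1.
have Xl_sub1 : 'X^l - 1 = ('X - 1) * g.
  by rewrite subrX1 /g poly_def; under [in RHS]eq_bigr do rewrite scale1r.
have g1 : g.[1] = l%:R.
  rewrite /g horner_poly; under eq_bigr do rewrite expr1n mulr1.
  by rewrite sumr_const card_ord.
have [f [f_monic f_irr f_g]] : exists f, [/\ f \is monic, irreducible_poly f & f %| g].
  by apply: monic_irreducible_factor; rewrite size_poly_eq ?oner_neq0 ?prime_gt1.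
have f_Xl : f %| 'X^l - 1 by rewrite Xl_sub1 dvdp_mull.
have f1 : ~~ root f 1.
  apply: contraNN (natr_neq0_coprime l_pr co_lq) => /(root_dvdp f_g).
  by rewrite /root g1.
have f0_neq0 : f`_0 != 0.
  have : ~~ root ('X^l - 1 : {poly F}) 0.
    by rewrite /root !hornerE expr0n gtn_eqF ?prime_gt0 // sub0r oppr_eq0 oner_eq0.
  by apply: contraNneq => f0; apply: (root_dvdp f_Xl); rewrite /root horner_coef0 f0.
have [K [io [a [root_a _ _]]]] := rupture_field f_monic f_irr.
have al : a ^+ l = 1 by apply/eqP; rewrite -(root_map_Xn_sub1 io) root_a.
have a_neq0 : a != 0 by apply: (root_map_neq0 (io := io) f0_neq0); rewrite root_a.
have a_inv : a^-1 = a ^+ (q ^ s).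
  apply: (mulIf a_neq0); rewrite mulVf // -exprSr -addn1.
  by case/dvdnP: l_dvd => k ->; rewrite mulnC exprM al expr1n.
have sS_double : s.+1 = (2 * (s.+1)./2)%N.
  by rewrite mulnC muln2 -[LHS]odd_double_half /= s_odd.
have : root (map_poly io f) (a^-1 ^+ q).
  rewrite a_inv -exprM -expnSr sS_double expnM -cardF.
  by apply: root_map_expn_card; rewrite root_a.
by move/(dagger_fixedP f_monic f0_neq0 root_a) => f_dagger; exists f.
Qed.

Lemma scrim_dvd_Xgcdn_sub1 n (f : {poly F}) :
  coprime n q -> SCRIM q f -> f %| 'X^n - 1 ->
  exists2 s, odd s & f %| 'X^(gcdn n (q ^ s + 1)) - 1.
Proof.
move=> co_nq [f_monic f_irr f0_neq0 f_dagger] f_Xn.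
have [K [io [a [root_a gen_a cardK]]]] := rupture_field f_monic f_irr.
have an : a ^+ n = 1 by apply/eqP; rewrite -(root_map_Xn_sub1 io) root_a.
have : root (map_poly io f) (a^-1 ^+ q) by apply/(dagger_fixedP f_monic f0_neq0 root_a).
case/(root_rupture_conjugate root_a gen_a cardK) => j j_gt0 conj_eq.
(* q (q^(2j-1) + 1) = q^(2j) + q and a^(q^(2j)) * a^q = 1 *)
exists (j.-1).*2.+1; first by rewrite /= odd_double.
have a_neq0 : a != 0 by apply: (root_map_neq0 (io := io) f0_neq0); rewrite root_a.
rewrite -root_a root_map_Xn_sub1 -(Gauss_gcdr _ co_nq).
rewrite expr_gcdn_eq1 ?muln_gt0 ?q_gt0 ?addn1 //.
rewrite mulnS -expnS -doubleS prednK // -mul2n expnM -cardF exprD -conj_eq.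
by rewrite -exprMn mulfV ?expr1n.
Qed.

End SelfConjugateReciprocal.

Lemma monic_dvdp_XsubC (F : fieldType) (f : {poly F}) c :
  f \is monic -> (1 < size f)%N -> f %| 'X - c%:P -> f = 'X - c%:P.
Proof.
move=> f_monic f_gt1 /(irredp_XsubCP (irredp_XsubC c)) [f_1 | f_X].
  by rewrite -size_poly_eq1 in f_1; rewrite (eqP f_1) in f_gt1.
by apply/eqP; rewrite -eqp_monic ?monicXsubC.
Qed.

Unset Implicit Arguments.

Theorem corollary2p4 (F : finFieldType) (q n : nat) :
  (exists p k : nat, [/\ prime p, (0 < k)%N & q = (p ^ k)%N]) ->
  #|F| = (q ^ 2)%N ->
  (0 < n)%N -> odd n -> coprime n q ->
  ((forall f : {poly F}, SCRIM q f /\ f %| 'X^n - 1 <-> f = 'X - 1) <->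
   (forall l : nat, prime l -> (l %| n)%N ->
      ~~ odd (ord_mod l (q ^ 2)) || odd (ord_mod l q))).
Proof.
move=> [p [k [p_pr k_gt0 q_pk]]] cardF _ n_odd co_nq.
have q_pchar : [pchar F].-nat q.
  have pF : p \in [pchar F].
    by apply: (card_finPcharP (n := k * 2)); rewrite // cardF q_pk -expnM.
  by rewrite (eq_pnat _ (pcharf_eq pF)) q_pk pnatX pnat_id.
split=> [only_X1 l l_pr l_n | ord_cond f].
  have co_lq : coprime l q := coprime_dvdl l_n co_nq.
  apply: contraT; rewrite negb_or negbK.
  case/(dvdn_expn_add1P l_pr (dvdn_odd l_n n_odd) co_lq) => s s_odd l_dvd.
  have [f [f_scrim f_Xl f1]] := scrim_factor_Xn_sub1 q_pchar cardF l_pr co_lq s_odd l_dvd.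
  have f_Xn : f %| 'X^n - 1 := dvdp_trans f_Xl (dvdp_Xn_sub1 _ l_n).
  by move: f1; rewrite (only_X1 f).1 // -polyC1 root_XsubC eqxx.
split=> [[f_scrim f_Xn] | ->]; last first.
  by split; [exact: scrim_XsubC | rewrite -[X in X - 1]expr1 dvdp_Xn_sub1].
have [s s_odd] := scrim_dvd_Xgcdn_sub1 q_pchar cardF co_nq f_scrim f_Xn.
rewrite (gcdn_expn_add1_eq1 n_odd co_nq s_odd ord_cond) expr1 -polyC1.
case: f_scrim => f_monic [f_gt1 _] _ _; exact: monic_dvdp_XsubC.
Qed.
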